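(* Let $A$ be the weighted shift on $\mathcal{H}$ with weights $\{1/n\}_{n\ge1}$. If $r_1>r_2\ge0$, then $\|(z-r_1A)^{-1}\|\ge\|(z-r_2A)^{-1}\|$ for every complex $z\neq0$.
   Context: $\mathcal{H}$ is a separable infinite-dimensional complex Hilbert space with orthonormal basis $\{e_n\}_{n=0}^\infty$, and $A$ is defined by $Ae_n=\frac{1}{n+1}e_{n+1}$ for $n\ge0$. $A$ is quasinilpotent. *)

From Stdlib Require Import Reals.
From Coquelicot Require Import Coquelicot.

(* The Hilbert space H is modelled as l^2(N) over C, with e_n the
   standard basis vectors (coordinate sequences). *)
Definition seqC := nat -> C.

Definition in_l2 (x : seqC) : Prop := ex_series (fun n => (Cmod (x n)) ^ 2).

Definition l2norm (x : seqC) : R := sqrt (Series (fun n => (Cmod (x n)) ^ 2)).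

(* The weighted shift A e_n = 1/(n+1) e_{n+1}, i.e. (A x)_0 = 0 and
   (A x)_{m+1} = x_m / (m+1). *)
Definition shiftA (x : seqC) : seqC :=
  fun n => match n with
           | O => 0%C
           | S m => (x m / RtoC (INR (S m)))%C
           end.

Definition zmrA (z : C) (r : R) (x : seqC) : seqC :=
  fun n => (z * x n - RtoC r * shiftA x n)%C.

Definition is_l2_inverse (S T : seqC -> seqC) : Prop :=
  forall x, in_l2 x -> in_l2 (T x) /\ S (T x) = x /\ T (S x) = x.

Definition opnorm (T : seqC -> seqC) : Rbar :=
  Lub_Rbar (fun t => exists x, in_l2 x /\ l2norm x <= 1 /\ t = l2norm (T x)).

(* Solving (z - rA) x = y by forward substitution gives the inverse explicitly:
   x_0 = y_0 / z and x_(n+1) = (y_(n+1) + r x_n / (n+1)) / z.  Taking moduli, |x_n| is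
   dominated by the same recursion run on |y_n| with z replaced by |z|, and this
   majorant increases with r.  It is attained: on y_n = |x_n| (conj z / |z|)^n all the
   terms of the recursion have the same phase, so the triangle inequalities are
   equalities.  Hence every value ||(z - r2 A)^-1 x|| is bounded by a value
   ||(z - r1 A)^-1 y|| with ||y|| = ||x||.  The majorant is square-summable because
   r/(|z| (n+1)) is eventually at most 1/2. *)
From Stdlib Require Import Reals Lra Lia FunctionalExtensionality.
From Coquelicot Require Import Coquelicot.

Lemma INR_S_pos (m : nat) : 0 < INR (S m).
Proof. apply lt_0_INR; lia. Qed.

Lemma RtoC_INR_S_neq0 (m : nat) : RtoC (INR (S m)) <> 0%C.
Proof. intro H. apply RtoC_inj in H. pose proof (INR_S_pos m). lra. Qed.

Lemma ex_series_nonneg_bounded (w : nat -> R) (M : R) :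
  (forall n, 0 <= w n) -> (forall n, sum_n w n <= M) -> ex_series w.
Proof.
  intros Hw HM.
  destruct (ex_finite_lim_seq_incr (sum_n w) M) as [l Hl]; [|exact HM|now exists l].
  intro n. rewrite sum_Sn. unfold plus; simpl. specialize (Hw (S n)). lra.
Qed.

Lemma sum_n_le_Series (w : nat -> R) :
  (forall n, 0 <= w n) -> ex_series w -> forall n, sum_n w n <= Series w.
Proof.
  intros Hw Hs n. apply is_lim_seq_incr_compare; [exact (Series_correct w Hs)|].
  intro k. rewrite sum_Sn. unfold plus; simpl. specialize (Hw (S k)). lra.
Qed.

Lemma ex_series_contraction (w s : nat -> R) (q : R) (N : nat) :
  0 <= q < 1 -> (forall n, 0 <= w n) -> (forall n, 0 <= s n) -> ex_series s ->
  (forall m, (N <= m)%nat -> w (S m) <= s (S m) + q * w m) -> ex_series w.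
Proof.
  intros Hq Hw Hs Hss Hrec.
  set (W := fun k => w (N + k)%nat). set (S' := fun k => s (N + k)%nat).
  assert (HS' : ex_series S') by exact (proj1 (ex_series_incr_n s N) Hss).
  assert (Hsum : forall K, (1 - q) * sum_n W K + q * W K <= W O + sum_n S' K).
  { induction K as [|K IH].
    - rewrite !sum_O. unfold S'. specialize (Hs (N + 0)%nat). lra.
    - rewrite !sum_Sn. unfold plus; simpl.
      assert (Hstep : W (S K) <= S' (S K) + q * W K).
      { unfold W, S'. rewrite Nat.add_succ_r. apply Hrec. lia. }
      lra. }
  apply (ex_series_incr_n w N).
  apply (ex_series_nonneg_bounded W ((W O + Series S') / (1 - q))); [intro; apply Hw|].
  intro K. apply Rmult_le_reg_l with (1 - q); [lra|].
  replace ((1 - q) * ((W O + Series S') / (1 - q))) with (W O + Series S') by (field; lra).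
  pose proof (sum_n_le_Series S' (fun n => Hs _) HS' K).
  pose proof (Hw (N + K)%nat). specialize (Hsum K). fold (W K) in *. nra.
Qed.

Lemma in_l2_Cmod_ext (x y : seqC) :
  (forall n, Cmod (y n) = Cmod (x n)) -> in_l2 x -> in_l2 y.
Proof. intros H. apply ex_series_ext. intro n. now rewrite H. Qed.

Lemma l2norm_Cmod_ext (x y : seqC) :
  (forall n, Cmod (y n) = Cmod (x n)) -> l2norm y = l2norm x.
Proof. intros H. unfold l2norm. f_equal. apply Series_ext. intro n. now rewrite H. Qed.

Lemma l2norm_Cmod_le (x y : seqC) :
  (forall n, Cmod (x n) <= Cmod (y n)) -> in_l2 y -> l2norm x <= l2norm y.
Proof.
  intros H Hy. apply sqrt_le_1_alt, Series_le; [|exact Hy].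
  intro n. split; [apply pow2_ge_0|]. apply pow_incr. split; [apply Cmod_ge_0|apply H].
Qed.

Lemma opnorm_le (S T : seqC -> seqC) :
  (forall x, in_l2 x -> l2norm x <= 1 ->
     exists y, in_l2 y /\ l2norm y <= 1 /\ l2norm (S x) <= l2norm (T y)) ->
  Rbar_le (opnorm S) (opnorm T).
Proof.
  intros H. unfold opnorm.
  destruct (Lub_Rbar_correct (fun t => exists x, in_l2 x /\ l2norm x <= 1 /\ t = l2norm (T x)))
    as [HubT _].
  apply Lub_Rbar_correct. intros t (x & Hx & Hn & ->).
  destruct (H x Hx Hn) as (y & Hy & Hny & Hle).
  apply Rbar_le_trans with (l2norm (T y)); [exact Hle|].
  apply HubT. now exists y.
Qed.

Fixpoint resolvent (z : C) (r : R) (y : seqC) (n : nat) : C :=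
  match n with
  | O => (y O / z)%C
  | S m => ((y (S m) + RtoC r * (resolvent z r y m / RtoC (INR (S m)))) / z)%C
  end.

Section Resolvent.
Variables (z : C) (r : R).
Hypothesis Hz : z <> 0%C.

Lemma zmrA_resolvent (y : seqC) : zmrA z r (resolvent z r y) = y.
Proof.
  apply functional_extensionality. intros [|m]; unfold zmrA, shiftA; cbn [resolvent].
  - field. exact Hz.
  - field. split; [apply RtoC_INR_S_neq0|exact Hz].
Qed.

Lemma resolvent_zmrA (x : seqC) : resolvent z r (zmrA z r x) = x.
Proof.
  apply functional_extensionality. intro n.
  induction n as [|m IH]; cbn [resolvent]; [|rewrite IH]; unfold zmrA, shiftA.
  - field. exact Hz.
  - field. split; [apply RtoC_INR_S_neq0|exact Hz].
Qed.

Lemma l2_inverse_eq_resolvent (T : seqC -> seqC) (x : seqC) :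
  is_l2_inverse (zmrA z r) T -> in_l2 x -> T x = resolvent z r x.
Proof.
  intros HT Hx. destruct (HT x Hx) as (_ & HTx & _).
  rewrite <- HTx at 2. now rewrite resolvent_zmrA.
Qed.

End Resolvent.

Fixpoint majorant (c r : R) (a : nat -> R) (n : nat) : R :=
  match n with
  | O => a O / c
  | S m => (a (S m) + r * majorant c r a m / INR (S m)) / c
  end.

Section Majorant.
Variables (c : R) (a : nat -> R).
Hypotheses (Hc : 0 < c) (Ha : forall n, 0 <= a n).

Lemma majorant_ge0 (r : R) (n : nat) : 0 <= r -> 0 <= majorant c r a n.
Proof.
  intros Hr. induction n as [|m IH]; cbn [majorant].
  - apply Rdiv_le_0_compat; [apply Ha|exact Hc].
  - apply Rdiv_le_0_compat; [|exact Hc].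
    apply Rplus_le_le_0_compat; [apply Ha|].
    apply Rdiv_le_0_compat; [|apply INR_S_pos]. apply Rmult_le_pos; [exact Hr|].
    exact IH.
Qed.

Lemma majorant_le_r (r1 r2 : R) (n : nat) :
  0 <= r2 -> r2 <= r1 -> majorant c r2 a n <= majorant c r1 a n.
Proof.
  intros Hr2 Hr. induction n as [|m IH]; cbn [majorant]; [lra|].
  apply Rmult_le_compat_r; [left; apply Rinv_0_lt_compat, Hc|].
  apply Rplus_le_compat_l.
  apply Rmult_le_compat_r; [left; apply Rinv_0_lt_compat, INR_S_pos|].
  apply Rmult_le_compat; [exact Hr2|apply majorant_ge0; exact Hr2|exact Hr|exact IH].
Qed.

Lemma ex_series_majorant_sq (r : R) :
  0 <= r -> ex_series (fun n => a n ^ 2) -> ex_series (fun n => majorant c r a n ^ 2).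
Proof.
  intros Hr Ha2.
  destruct (INR_unbounded (2 * r / c)) as [N HN].
  apply (ex_series_contraction _ (fun n => 2 / c ^ 2 * a n ^ 2) (1 / 2) N).
  - lra.
  - intro; apply pow2_ge_0.
  - intro. apply Rmult_le_pos; [|apply pow2_ge_0].
    apply Rdiv_le_0_compat; [lra|apply pow_lt, Hc].
  - exact (@ex_series_scal_l _ R_NormedModule (2 / c ^ 2) _ Ha2).
  - intros m Hm. cbn [majorant].
    set (p := a (S m)). set (M := majorant c r a m). set (n := INR (S m)).
    assert (Hn : INR N + 1 <= n) by (unfold n; rewrite S_INR; apply le_INR in Hm; lra).
    assert (Hn0 : 0 < n) by apply INR_S_pos.
    (* For n > 2r/c the recursion contracts: t := r/(c n) <= 1/2, and
       (p/c + t M)^2 <= 2 (p/c)^2 + 2 t^2 M^2. *)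
    set (t := r / (c * n)).
    assert (Ht0 : 0 <= t) by (apply Rdiv_le_0_compat; [exact Hr|nra]).
    assert (H2r : 2 * r <= c * n) by (replace (2 * r) with (2 * r / c * c) by (field; lra); nra).
    assert (Ht1 : t <= 1 / 2).
    { unfold t, Rdiv. apply Rmult_le_reg_r with (c * n); [nra|].
      rewrite Rmult_assoc, Rinv_l by nra. lra. }
    replace ((p + r * M / n) / c) with (p / c + t * M) by (unfold t; field; lra).
    replace (2 / c ^ 2 * p ^ 2) with (2 * (p / c) ^ 2) by (field; lra).
    assert (t * t * M ^ 2 <= 1 / 4 * M ^ 2) by (apply Rmult_le_compat_r; [apply pow2_ge_0|nra]).
    pose proof (pow2_ge_0 (p / c - t * M)). nra.
Qed.

End Majorant.

Lemma Cmod_resolvent_le (z : C) (r : R) (x : seqC) (n : nat) :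
  z <> 0%C -> 0 <= r ->
  Cmod (resolvent z r x n) <= majorant (Cmod z) r (fun k => Cmod (x k)) n.
Proof.
  intros Hz Hr. apply Cmod_gt_0 in Hz as Hc.
  induction n as [|m IH]; cbn [resolvent majorant]; rewrite Cmod_div by now apply Cmod_gt_0.
  - lra.
  - apply Rmult_le_compat_r; [left; apply Rinv_0_lt_compat, Hc|].
    eapply Rle_trans; [apply Cmod_triangle|]. apply Rplus_le_compat_l.
    rewrite Cmod_mult, Cmod_div, !Cmod_R by apply RtoC_INR_S_neq0.
    rewrite Rabs_pos_eq, (Rabs_pos_eq (INR (S m))) by (auto; left; apply INR_S_pos).
    unfold Rdiv. rewrite <- Rmult_assoc.
    apply Rmult_le_compat_r; [left; apply Rinv_0_lt_compat, INR_S_pos|].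
    apply Rmult_le_compat_l; assumption.
Qed.

Lemma in_l2_resolvent (z : C) (r : R) (x : seqC) :
  z <> 0%C -> 0 <= r -> in_l2 x -> in_l2 (resolvent z r x).
Proof.
  intros Hz Hr Hx. apply Cmod_gt_0 in Hz as Hc.
  apply (@ex_series_le R_AbsRing R_CompleteNormedModule _
           (fun n => majorant (Cmod z) r (fun k => Cmod (x k)) n ^ 2)).
  2: { apply ex_series_majorant_sq; auto using Cmod_ge_0. }
  intro n.
  change (Rabs (Cmod (resolvent z r x n) ^ 2)
          <= majorant (Cmod z) r (fun k => Cmod (x k)) n ^ 2).
  rewrite Rabs_pos_eq by apply pow2_ge_0.
  apply pow_incr. split; [apply Cmod_ge_0|now apply Cmod_resolvent_le].
Qed.

Lemma resolvent_is_l2_inverse (z : C) (r : R) :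
  z <> 0%C -> 0 <= r -> is_l2_inverse (zmrA z r) (resolvent z r).
Proof.
  intros Hz Hr x Hx.
  split; [now apply in_l2_resolvent|].
  split; [now apply zmrA_resolvent|now apply resolvent_zmrA].
Qed.

Section Aligned.
Variable z : C.
Hypothesis Hz : z <> 0%C.

Definition phase : C := (Cconj z / RtoC (Cmod z))%C.

Definition aligned (x : seqC) : seqC := fun n => (RtoC (Cmod (x n)) * phase ^ n)%C.

Lemma RtoC_Cmod_neq0 : RtoC (Cmod z) <> 0%C.
Proof. intro H. apply RtoC_inj in H. apply Cmod_gt_0 in Hz. lra. Qed.

Lemma Cmult_phase : (z * phase = RtoC (Cmod z))%C.
Proof.
  pose proof RtoC_Cmod_neq0. unfold phase.
  replace (z * (Cconj z / RtoC (Cmod z)))%C with (z * Cconj z / RtoC (Cmod z))%C by (field; auto).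
  rewrite <- Cmod2_conj, RtoC_pow. field. auto.
Qed.

Lemma Cdiv_phase (w : C) : (w / z = w * phase / RtoC (Cmod z))%C.
Proof.
  rewrite <- Cmult_phase. field.
  split; [|exact Hz]. intro Hph. apply RtoC_Cmod_neq0. now rewrite <- Cmult_phase, Hph, Cmult_0_r.
Qed.

Lemma Cmod_phase : Cmod phase = 1.
Proof.
  apply Cmod_gt_0 in Hz as Hc. unfold phase.
  rewrite Cmod_div by apply RtoC_Cmod_neq0.
  rewrite Cmod_conj, Cmod_R, Rabs_pos_eq by lra. field. lra.
Qed.

Lemma Cmod_aligned (x : seqC) (n : nat) : Cmod (aligned x n) = Cmod (x n).
Proof.
  unfold aligned. rewrite Cmod_mult, Cmod_pow, Cmod_phase, pow1, Cmod_R.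
  rewrite Rabs_pos_eq by apply Cmod_ge_0. ring.
Qed.

Lemma resolvent_aligned (r : R) (x : seqC) (n : nat) :
  resolvent z r (aligned x) n =
  (RtoC (majorant (Cmod z) r (fun k => Cmod (x k)) n) * phase ^ S n)%C.
Proof.
  apply Cmod_gt_0 in Hz as Hc. pose proof RtoC_Cmod_neq0.
  induction n as [|m IH]; cbn [resolvent majorant]; rewrite Cdiv_phase; [|rewrite IH];
    unfold aligned.
  - rewrite RtoC_div by lra. cbn [Cpow]. field. auto.
  - pose proof (INR_S_pos m).
    rewrite RtoC_div, RtoC_plus, RtoC_div, RtoC_mult by lra. cbn [Cpow].
    field. split; [apply RtoC_INR_S_neq0|auto].
Qed.

Lemma Cmod_resolvent_aligned (r : R) (x : seqC) (n : nat) : 0 <= r ->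
  Cmod (resolvent z r (aligned x) n) = majorant (Cmod z) r (fun k => Cmod (x k)) n.
Proof.
  intros Hr. apply Cmod_gt_0 in Hz as Hc.
  rewrite resolvent_aligned, Cmod_mult, Cmod_pow, Cmod_phase, pow1, Cmod_R.
  rewrite Rabs_pos_eq by (apply majorant_ge0; auto; intro; apply Cmod_ge_0). ring.
Qed.

Lemma Cmod_resolvent_le_aligned (r1 r2 : R) (x : seqC) (n : nat) :
  0 <= r2 -> r2 <= r1 ->
  Cmod (resolvent z r2 x n) <= Cmod (resolvent z r1 (aligned x) n).
Proof.
  intros Hr2 Hr. apply Cmod_gt_0 in Hz as Hc.
  rewrite Cmod_resolvent_aligned by lra.
  eapply Rle_trans; [now apply Cmod_resolvent_le|].
  apply majorant_le_r; auto. intro; apply Cmod_ge_0.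
Qed.

End Aligned.

Theorem lemma3p4 (r1 r2 : R) (z : C) :
  0 <= r2 -> r2 < r1 -> z <> 0%C ->
  (exists T1, is_l2_inverse (zmrA z r1) T1) /\
  (exists T2, is_l2_inverse (zmrA z r2) T2) /\
  (forall T1 T2, is_l2_inverse (zmrA z r1) T1 -> is_l2_inverse (zmrA z r2) T2 ->
     Rbar_le (opnorm T2) (opnorm T1)).
Proof.
  intros Hr2 Hr12 Hz.
  split; [exists (resolvent z r1); apply resolvent_is_l2_inverse; auto; lra|].
  split; [exists (resolvent z r2); apply resolvent_is_l2_inverse; auto|].
  intros T1 T2 HT1 HT2. apply opnorm_le. intros x Hx Hnx.
  assert (Hy : in_l2 (aligned z x)) by (apply (in_l2_Cmod_ext x); auto using Cmod_aligned).
  exists (aligned z x). split; [exact Hy|].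
  split; [rewrite (l2norm_Cmod_ext x); auto using Cmod_aligned|].
  rewrite (l2_inverse_eq_resolvent z r2 Hz T2 x HT2 Hx).
  rewrite (l2_inverse_eq_resolvent z r1 Hz T1 _ HT1 Hy).
  apply l2norm_Cmod_le; [|apply in_l2_resolvent; auto; lra].
  intro n. apply Cmod_resolvent_le_aligned; auto; lra.
Qed.
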